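(* Let $p\ge 2$, let $s\in\mathbb{R}^n$ be nonzero and let $\mathcal{R}\in\mathbb{R}^{\otimes^{p-1} n}_{\mathrm{sym}}$. Then the problem of minimizing $\|\mathcal{U}\|_F$ over $\mathcal{U}\in\mathbb{R}^{\otimes^p n}_{\mathrm{sym}}$ subject to $\mathcal{U}[s]=\mathcal{R}$ has a unique solution, and this solution is the unique $\mathcal{U}\in\mathbb{R}^{\otimes^p n}_{\mathrm{sym}}$ satisfying both $\mathcal{U}[s]=\mathcal{R}$ and $\mathcal{U}[u_1,\dots,u_p]=0$ whenever all of $u_1,\dots,u_p\in\mathbb{R}^n$ are orthogonal to $s$.
   Context: A $p$-tensor $\mathcal{T} \in \mathbb{R}^{\otimes^p n}$ is a multilinear map $(\mathbb{R}^n)^p \to \mathbb{R}$; $\mathcal{T}[s]$ denotes the $(p-1)$-tensor obtained by fixing the first argument to $s$. $\mathcal{T}$ is symmetric if it is invariant under all permutations of its arguments; $\mathbb{R}^{\otimes^p n}_{\mathrm{sym}}$ is the space of symmetric $p$-tensors. $\|\cdot\|_F$ is the Frobenius norm of the array of entries $\mathcal{T}[e_{i_1},\dots,e_{i_p}]$. *)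

From HB Require Import structures.
From mathcomp Require Import all_boot all_order all_algebra.
From mathcomp Require Import fingroup perm reals.
Set Implicit Arguments. Unset Strict Implicit. Unset Printing Implicit Defensive.
Import Order.TTheory GRing.Theory Num.Theory.
Local Open Scope ring_scope.

(* A p-tensor on R^n, given by its array of entries T[e_{i_1},...,e_{i_p}],
   indexed by multi-indices idx : 'I_p -> 'I_n. *)
Definition tensor (R : Type) (n p : nat) := {ffun {ffun 'I_p -> 'I_n} -> R}.

Definition sym_tensor (R : Type) n p (T : tensor R n p) : Prop :=
  forall (sigma : 'S_p) (idx : {ffun 'I_p -> 'I_n}),
    T [ffun k => idx (sigma k)] = T idx.

Definition teval (R : ringType) n p (T : tensor R n p) (u : 'I_p -> 'rV[R]_n) : R :=
  \sum_(idx : {ffun 'I_p -> 'I_n}) T idx * \prod_(k < p) u k 0 (idx k).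

(* The p-index (i, idx') : first coordinate i, the remaining p-1 given by idx'. *)
Definition cons_idx n p (i : 'I_n) (idx' : {ffun 'I_p.-1 -> 'I_n}) :
  {ffun 'I_p -> 'I_n} :=
  [ffun k : 'I_p => if insub (val k).-1 is Some j then
                      (if val k == 0%N then i else idx' j) else i].

(* T[s] : the (p-1)-tensor obtained by fixing the first argument to s. *)
Definition contract (R : ringType) n p (s : 'rV[R]_n) (T : tensor R n p) :
  tensor R n p.-1 :=
  [ffun idx' => \sum_(i < n) s 0 i * T (cons_idx i idx')].

Definition frob (R : rcfType) n p (T : tensor R n p) : R :=
  Num.sqrt (\sum_(idx : {ffun 'I_p -> 'I_n}) T idx ^+ 2).

Definition dotv (R : ringType) n (u v : 'rV[R]_n) : R := \sum_(i < n) u 0 i * v 0 i.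

From HB Require Import structures.
From mathcomp Require Import all_boot all_order all_algebra.
From mathcomp Require Import fingroup perm reals.
From mathcomp Require Import ring zify.
Set Implicit Arguments. Unset Strict Implicit. Unset Printing Implicit Defensive.
Import Order.TTheory GRing.Theory Num.Theory.
Local Open Scope ring_scope.

(* Let P be the orthogonal projection onto s^perp and c(x) = <x,s>/<s,s>, so that
   x = P x + c(x) s.  Expanding every argument this way shows that a tensor vanishing
   both on (s^perp)^p and on every tuple containing s is zero.  The tensor
     U[x_1,...,x_p] = sum_m c(x_m) R[P x_1,...,P x_(m-1), x_(m+1),...,x_p]
   vanishes on (s^perp)^p, and when some x_k = s it equals R evaluated at the other
   arguments (a telescoping sum, using the symmetry of R).  Hence U - U o sigma is
   zero, i.e. U is symmetric, and U[s] = R.  For any symmetric V with V[s] = R the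
   difference V - U vanishes on tuples containing s, which by the same expansion makes
   it Frobenius-orthogonal to U, so ||V||^2 = ||U||^2 + ||V - U||^2. *)

Section TensorEvaluation.
Variables (R : comNzRingType) (n : nat).

Lemma eq_teval p (T : tensor R n p) (u v : 'I_p -> 'rV[R]_n) :
  u =1 v -> teval T u = teval T v.
Proof. by move=> uv; apply: eq_bigr => idx _; under eq_bigr do rewrite uv. Qed.

Lemma sym_tensorB p (A B : tensor R n p) :
  sym_tensor A -> sym_tensor B -> sym_tensor (A - B).
Proof. by move=> A_sym B_sym sigma idx; rewrite !ffunE A_sym B_sym. Qed.

Lemma teval_delta p (T : tensor R n p) (idx : {ffun 'I_p -> 'I_n}) :
  teval T (fun k => delta_mx 0 (idx k)) = T idx.
Proof.
rewrite /teval (bigD1 idx) //= big1 => [|k _]; last by rewrite mxE !eqxx.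
rewrite mulr1 big1 ?addr0 // => jdx jdx_idx.
have /existsP[k jk] : [exists k, jdx k != idx k].
  by apply: contraR jdx_idx => /existsPn eqk; apply/eqP/ffunP => k; apply/eqP/negPn.
by rewrite (bigD1 k) //= mxE eqxx (negPf jk) mul0r mulr0.
Qed.

Lemma tensorP p (T1 T2 : tensor R n p) :
  (forall u, teval T1 u = teval T2 u) -> T1 = T2.
Proof. by move=> eqT; apply/ffunP => idx; rewrite -!teval_delta eqT. Qed.

Lemma teval0 p u : teval (0 : tensor R n p) u = 0.
Proof. by rewrite /teval big1 // => idx _; rewrite ffunE mul0r. Qed.

Lemma tevalB p (T1 T2 : tensor R n p) u :
  teval (T1 - T2) u = teval T1 u - teval T2 u.
Proof. by rewrite /teval -sumrB; apply: eq_bigr => idx _; rewrite !ffunE mulrBl. Qed.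

Lemma teval_perm p (T : tensor R n p) (sigma : 'S_p) u :
  teval T (fun k => u (sigma k)) =
  teval [ffun idx : {ffun 'I_p -> 'I_n} => T [ffun k => idx (sigma k)]] u.
Proof.
rewrite /teval (reindex_inj (h := fun idx : {ffun 'I_p -> 'I_n} =>
  [ffun k => idx (sigma k)])); last first.
  move=> i j /ffunP eqij; apply/ffunP => k.
  by have := eqij ((sigma^-1)%g k); rewrite !ffunE permKV.
apply: eq_bigr => idx _; rewrite ffunE; congr (_ * _).
by rewrite [RHS](reindex_inj (@perm_inj _ sigma)); apply: eq_bigr => k _; rewrite ffunE.
Qed.

Lemma sym_teval p (T : tensor R n p) (sigma : 'S_p) u :
  sym_tensor T -> teval T (fun k => u (sigma k)) = teval T u.
Proof.
by move=> symT; rewrite teval_perm; congr teval; apply/ffunP => idx; rewrite ffunE symT.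
Qed.

(* Arguments beyond the end of [xs] are read as 0. *)
Definition tevals p (T : tensor R n p) (xs : seq 'rV[R]_n) := teval T (nth 0 xs).

Lemma teval_map_enum p (T : tensor R n p) u : teval T u = tevals T (map u (enum 'I_p)).
Proof. by apply: eq_teval => k; rewrite (nth_map k) ?nth_ord_enum // size_enum_ord. Qed.

Lemma perm_tevals p (T : tensor R n p) xs ys :
  sym_tensor T -> size ys = p -> perm_eq xs ys -> tevals T xs = tevals T ys.
Proof.
move=> symT /eqP szys; rewrite -[ys in perm_eq _ ys]/(tval (Tuple szys)).
case/tuple_permP=> sigma ->; rewrite /tevals -[RHS](sym_teval sigma _ symT).
apply: eq_teval => k /=; rewrite (nth_map k) ?size_enum_ord // nth_ord_enum.
by rewrite (tnth_nth 0).
Qed.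

Lemma nth_cat_cons_neq (xs ys : seq 'rV[R]_n) y z k : k != size xs ->
  nth 0 (xs ++ y :: ys) k = nth 0 (xs ++ z :: ys) k.
Proof.
rewrite !nth_cat => kxs; case: ltnP => // xsk.
have : (0 < k - size xs)%N by rewrite subn_gt0 ltn_neqAle eq_sym kxs.
by case: (k - size xs)%N.
Qed.

Lemma tevals_cat_cons p (T : tensor R n p) xs y ys : (size xs < p)%N ->
  tevals T (xs ++ y :: ys) = \sum_(i < n) y 0 i * tevals T (xs ++ delta_mx 0 i :: ys).
Proof.
move=> xs_p; pose m := Ordinal xs_p.
rewrite /tevals /teval; under [RHS]eq_bigr do rewrite mulr_sumr.
rewrite [RHS]exchange_big /=; apply: eq_bigr => idx _.
pose C := \prod_(k < p | k != m) nth 0 (xs ++ 0 :: ys) k 0 (idx k).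
have prod_slot v : \prod_(k < p) nth 0 (xs ++ v :: ys) k 0 (idx k) = v 0 (idx m) * C.
  rewrite (bigD1 m) //= nth_cat ltnn subnn; congr (_ * _).
  by apply: eq_bigr => k km; rewrite (nth_cat_cons_neq _ _ 0 km).
rewrite prod_slot (bigD1 (idx m)) //= prod_slot mxE !eqxx mul1r big1 ?addr0.
  by rewrite mulrCA.
by move=> i /negPf im; rewrite prod_slot mxE eq_sym im mul0r !mulr0.
Qed.

Lemma tevals_cat_consB p (T : tensor R n p) xs y z ys : (size xs < p)%N ->
  tevals T (xs ++ (y - z) :: ys) = tevals T (xs ++ y :: ys) - tevals T (xs ++ z :: ys).
Proof.
by move=> xs_p; rewrite !tevals_cat_cons // -sumrB; apply: eq_bigr => i _; rewrite !mxE mulrBl.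
Qed.

Lemma tevals_cat_consZ p (T : tensor R n p) xs (c : R) y ys : (size xs < p)%N ->
  tevals T (xs ++ (c *: y) :: ys) = c * tevals T (xs ++ y :: ys).
Proof.
move=> xs_p; rewrite !tevals_cat_cons // mulr_sumr.
by apply: eq_bigr => i _; rewrite mxE mulrA.
Qed.

Lemma tevals_cat_cons0 p (T : tensor R n p) xs ys : (size xs < p)%N ->
  tevals T (xs ++ 0 :: ys) = 0.
Proof. by move=> xs_p; rewrite -(scale0r 0) tevals_cat_consZ ?mul0r. Qed.

Lemma dotvE (u v : 'rV[R]_n) : dotv u v = (u *m v^T) 0 0.
Proof. by rewrite mxE; apply: eq_bigr => i _; rewrite mxE. Qed.

Definition tdot p (U W : tensor R n p) := \sum_idx U idx * W idx.

Lemma tdot_adjoint p (U W : tensor R n p) (M : 'M[R]_n) :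
  \sum_idx U idx * teval W (fun k => delta_mx 0 (idx k) *m M) =
  \sum_idx W idx * teval U (fun k => delta_mx 0 (idx k) *m M^T).
Proof.
rewrite /teval; under eq_bigr do rewrite mulr_sumr.
rewrite exchange_big; apply: eq_bigr => jdx _; rewrite mulr_sumr; apply: eq_bigr => idx _.
rewrite mulrCA; congr (_ * (_ * _)); apply: eq_bigr => k _.
by rewrite -!rowE !mxE.
Qed.

Lemma tdot_pythagoras p (A B : tensor R n p) :
  tdot A B = 0 -> tdot (A + B) (A + B) = tdot A A + tdot B B.
Proof.
move=> AB0; rewrite /tdot -big_split /=; apply/eqP; rewrite -subr_eq0 -sumrB.
rewrite (eq_bigr (fun idx => (A idx * B idx) *+ 2)) => [|idx _]; last by rewrite !ffunE; ring.
by rewrite sumrMnl -/(tdot A B) AB0 mul0rn.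
Qed.

End TensorEvaluation.

Section Contraction.
Variables (R : comNzRingType) (n q : nat).

Lemma cons_idx0 (i : 'I_n) (idx : {ffun 'I_q -> 'I_n}) : @cons_idx n q.+1 i idx ord0 = i.
Proof. by rewrite ffunE /=; case: insub. Qed.

Lemma cons_idxS (i : 'I_n) (idx : {ffun 'I_q -> 'I_n}) (j : 'I_q) :
  @cons_idx n q.+1 i idx (lift ord0 j) = idx j.
Proof.
by rewrite ffunE /= insubT /= => [|lt_j]; [exact: ltn_ord | congr (idx _); apply: val_inj].
Qed.

Lemma teval_contract (s : 'rV[R]_n) (T : tensor R n q.+1) (u : 'I_q.+1 -> 'rV[R]_n) :
  u ord0 = s -> teval (contract s T) (fun j => u (lift ord0 j)) = teval T u.
Proof.
move=> u0; rewrite /teval.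
rewrite (reindex (fun ix : 'I_n * {ffun 'I_q -> 'I_n} => @cons_idx n q.+1 ix.1 ix.2)) /=.
  rewrite -(pair_big xpredT xpredT (fun i idx => T (@cons_idx n q.+1 i idx) *
    \prod_(k < q.+1) u k 0 (@cons_idx n q.+1 i idx k))) exchange_big /=.
  apply: eq_bigr => idx _; rewrite ffunE mulr_suml; apply: eq_bigr => i _.
  rewrite big_ord_recl cons_idx0 u0 mulrCA mulrA.
  by under [in RHS]eq_bigr do rewrite cons_idxS.
exists (fun idx : {ffun 'I_q.+1 -> 'I_n} => (idx ord0, [ffun j => idx (lift ord0 j)])).
  move=> [i idx] _ /=; rewrite cons_idx0; congr pair.
  by apply/ffunP => j; rewrite ffunE cons_idxS.
move=> idx _; apply/ffunP => k; case: (unliftP ord0 k) => [j ->|->] /=.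
  by rewrite cons_idxS ffunE.
by rewrite cons_idx0.
Qed.

Lemma tevals_contract (s : 'rV[R]_n) (T : tensor R n q.+1) xs :
  tevals (contract s T) xs = tevals T (s :: xs).
Proof. exact: (teval_contract T (u := nth 0 (s :: xs))). Qed.

Lemma contractB (s : 'rV[R]_n) (T1 T2 : tensor R n q.+1) :
  contract s (T1 - T2) = contract s T1 - contract s T2.
Proof.
by apply/ffunP => idx; rewrite !ffunE -sumrB; apply: eq_bigr => i _; rewrite !ffunE mulrBr.
Qed.

End Contraction.

Section Vanishing.
Variables (R : comNzRingType) (n : nat) (s : 'rV[R]_n).

Definition null_on_perp p (T : tensor R n p) :=
  forall u, (forall k, dotv (u k) s = 0) -> teval T u = 0.

Definition null_on_s p (T : tensor R n p) := forall u k, u k = s -> teval T u = 0.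

Lemma null_on_s_cat_cons p (T : tensor R n p) xs ys :
  null_on_s T -> (size xs < p)%N -> tevals T (xs ++ s :: ys) = 0.
Proof. by move=> Ts xs_p; apply: (Ts _ (Ordinal xs_p)); rewrite nth_cat ltnn subnn. Qed.

Lemma sym_contract_null_on_s q (W : tensor R n q.+1) :
  sym_tensor W -> contract s W = 0 -> null_on_s W.
Proof.
move=> W_sym W_s u k uk.
have s_u : s \in map u (enum 'I_q.+1) by rewrite -uk map_f ?mem_enum.
rewrite teval_map_enum (perm_tevals W_sym _ (perm_to_rem s_u)); last first.
  by rewrite /= size_rem // size_map size_enum_ord.
by rewrite -tevals_contract W_s /tevals teval0.
Qed.

End Vanishing.

Section OrthogonalProjection.
Variables (R : fieldType) (n : nat) (s : 'rV[R]_n).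
Hypothesis s_neq0 : dotv s s != 0.

Local Notation null_on_perp := (null_on_perp s).
Local Notation null_on_s := (null_on_s s).

Definition coef (x : 'rV[R]_n) := dotv x s / dotv s s.

Definition projmx : 'M[R]_n := 1%:M - (dotv s s)^-1 *: (s^T *m s).

Lemma mulmx_projmx x : x *m projmx = x - coef x *: s.
Proof.
rewrite mulmxBr mulmx1 -scalemxAr mulmxA [x *m _]mx11_scalar mul_scalar_mx.
by rewrite -dotvE scalerA mulrC.
Qed.

Lemma subr_mulmx_projmx x : x - x *m projmx = coef x *: s.
Proof. by rewrite mulmx_projmx opprB addrC subrK. Qed.

Lemma coef_s : coef s = 1.
Proof. exact: mulfV. Qed.

Lemma s_projmx : s *m projmx = 0.
Proof. by rewrite mulmx_projmx coef_s scale1r subrr. Qed.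

Lemma dotv_projmx x : dotv (x *m projmx) s = 0.
Proof.
rewrite dotvE mulmx_projmx mulmxBl -scalemxAl.
by rewrite [LHS]mxE [X in _ + X]mxE [X in _ - X]mxE -!dotvE mulfVK ?subrr.
Qed.

Lemma projmx_sym : projmx^T = projmx.
Proof. by rewrite /projmx linearB /= tr_scalar_mx linearZ /= trmx_mul trmxK. Qed.

Definition project_prefix m (xs : seq 'rV[R]_n) :=
  map (mulmx^~ projmx) (take m xs) ++ drop m xs.

Lemma tevals_project_prefix_step p (T : tensor R n p) xs m :
  (m < size xs)%N -> (m < p)%N ->
  tevals T (project_prefix m xs) - tevals T (project_prefix m.+1 xs) =
  coef xs`_m * tevals T (map (mulmx^~ projmx) (take m xs) ++ s :: drop m.+1 xs).
Proof.
move=> m_xs m_p; have m_take : size (map (mulmx^~ projmx) (take m xs)) = m.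
  by rewrite size_map size_takel // ltnW.
rewrite /project_prefix (drop_nth 0) // (take_nth 0) // map_rcons cat_rcons.
by rewrite -tevals_cat_consB ?m_take // subr_mulmx_projmx tevals_cat_consZ ?m_take.
Qed.

Lemma tevals_project_prefix p (T : tensor R n p) xs k :
  (k <= size xs)%N -> (k <= p)%N ->
  tevals T xs - tevals T (project_prefix k xs) =
  \sum_(m < k) coef xs`_m *
    tevals T (map (mulmx^~ projmx) (take m xs) ++ s :: drop m.+1 xs).
Proof.
move=> k_xs k_p; have xs0 : project_prefix 0 xs = xs by rewrite /project_prefix take0 drop0.
rewrite -[tevals T xs](congr1 (tevals T) xs0) -[LHS]opprB.
rewrite -(telescope_sumr (fun m => tevals T (project_prefix m xs))) // -sumrN big_mkord.
apply: eq_bigr => m _.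
by rewrite opprB tevals_project_prefix_step //; apply: leq_trans (ltn_ord m) _.
Qed.

Lemma teval_projmx p (T : tensor R n p) u :
  null_on_s T -> teval T u = teval T (fun k => u k *m projmx).
Proof.
move=> Ts; apply/eqP; rewrite -subr_eq0 !teval_map_enum (map_comp (mulmx^~ projmx) u).
set xs := map u (enum 'I_p); have size_xs : size xs = p by rewrite size_map size_enum_ord.
rewrite (_ : map _ xs = project_prefix p xs); last first.
  by rewrite /project_prefix -size_xs take_size drop_size cats0.
rewrite tevals_project_prefix ?size_xs //.
apply/eqP/big1 => m _; rewrite null_on_s_cat_cons ?mulr0 //.
by rewrite size_map size_takel // size_xs ltnW.
Qed.

Lemma null_on_perp_s_eq0 p (T : tensor R n p) :
  null_on_perp T -> null_on_s T -> T = 0.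
Proof.
move=> Tperp Ts; apply: tensorP => u.
by rewrite teval_projmx // teval0 Tperp // => k; exact: dotv_projmx.
Qed.

Lemma tdot_null_on_perp_s p (U W : tensor R n p) :
  null_on_perp U -> null_on_s W -> tdot U W = 0.
Proof.
move=> Uperp Ws; rewrite /tdot.
under eq_bigr do rewrite -[W _]teval_delta (teval_projmx _ Ws).
rewrite tdot_adjoint projmx_sym big1 // => idx _.
by rewrite Uperp ?mulr0 // => k; exact: dotv_projmx.
Qed.

End OrthogonalProjection.

Lemma nth_map_take_cat_drop (R : nzRingType) n (f : 'rV[R]_n -> 'rV[R]_n) xs m j :
  (m <= size xs)%N ->
  nth 0 (map f (take m xs) ++ drop m.+1 xs) j = if (j < m)%N then f xs`_j else xs`_j.+1.
Proof.
move=> m_xs; rewrite nth_cat size_map size_takel //; case: ltnP => j_m.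
  by rewrite (nth_map 0) ?size_takel // nth_take.
by rewrite nth_drop addSn subnKC.
Qed.

Lemma perm_enum_perm p (sigma : 'S_p) : perm_eq (map sigma (enum 'I_p)) (enum 'I_p).
Proof.
apply: uniq_perm; rewrite ?enum_uniq ?(map_inj_uniq perm_inj) ?enum_uniq // => i.
by rewrite mem_enum; apply/mapP; exists ((sigma^-1)%g i); rewrite ?mem_enum ?permKV.
Qed.

Section Extension.
Variables (R : fieldType) (n q : nat) (s : 'rV[R]_n).
Hypothesis s_neq0 : dotv s s != 0.
Variable Rt : tensor R n q.

Local Notation P := (projmx s).

Definition extension_term xs m :=
  coef s xs`_m * tevals Rt (map (mulmx^~ P) (take m xs) ++ drop m.+1 xs).

Definition extension_form xs := \sum_(m < q.+1) extension_term xs m.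

Definition extension_coef (m : 'I_q.+1) (jdx : {ffun 'I_q -> 'I_n}) k i : R :=
  if unlift m k is Some j then (if (j < m)%N then P i (jdx j) else (i == jdx j)%:R)
  else s 0 i / dotv s s.

Definition extension : tensor R n q.+1 :=
  [ffun idx : {ffun 'I_q.+1 -> 'I_n} =>
     \sum_(m < q.+1) \sum_jdx Rt jdx * \prod_k extension_coef m jdx k (idx k)].

Lemma tevals_extension xs : size xs = q.+1 -> tevals extension xs = extension_form xs.
Proof.
move=> size_xs; rewrite /tevals /teval /extension_form.
under eq_bigr do rewrite ffunE mulr_suml.
rewrite exchange_big; apply: eq_bigr => m _.
under eq_bigr do rewrite mulr_suml.
rewrite exchange_big /= /extension_term /tevals /teval mulr_sumr; apply: eq_bigr => jdx _.
transitivity (Rt jdx * \prod_(k < q.+1) \sum_(i < n) xs`_k 0 i * extension_coef m jdx k i).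
  rewrite bigA_distr_bigA mulr_sumr; apply: eq_bigr => idx _.
  by rewrite -mulrA -big_split; congr (_ * _); apply: eq_bigr => k _; rewrite mulrC.
rewrite (bigD1_ord m) //= mulrCA; congr (_ * (_ * _)).
  rewrite /coef [dotv _ s]/dotv mulr_suml.
  by apply: eq_bigr => i _; rewrite /extension_coef unlift_none mulrA.
apply: eq_bigr => j _; rewrite /extension_coef liftK.
rewrite nth_map_take_cat_drop; last by rewrite size_xs ltnW.
rewrite /bump; case: ltnP => _ /=.
  by rewrite mxE; apply: eq_bigr.
rewrite (bigD1 (jdx j)) //= eqxx mulr1 big1 ?addr0 // => i /negPf ij.
by rewrite ij mulr0.
Qed.

Lemma extension_term_cat_cons_gt ys zs m : (size ys < m <= q)%N ->
  extension_term (ys ++ s :: zs) m = 0.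
Proof.
case/andP=> ys_m m_q; rewrite /extension_term take_cat ltnNge (ltnW ys_m) /=.
have: (0 < m - size ys)%N by rewrite subn_gt0.
case: (m - size ys)%N => // k _; rewrite map_cat /= s_projmx // -catA cat_cons.
by rewrite tevals_cat_cons0 ?mulr0 // size_map; apply: leq_trans m_q.
Qed.

Lemma extension_term_cat_cons_size ys zs :
  extension_term (ys ++ s :: zs) (size ys) = tevals Rt (map (mulmx^~ P) ys ++ zs).
Proof.
rewrite /extension_term nth_cat ltnn subnn coef_s // mul1r take_size_cat //.
by rewrite drop_cat ltnNge leqnSn /= subSnn drop1.
Qed.

Hypothesis Rt_sym : sym_tensor Rt.

Lemma extension_term_cat_cons_lt ys zs m : (m < size ys)%N -> size ys + size zs = q ->
  extension_term (ys ++ s :: zs) m =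
  coef s (ys ++ zs)`_m *
    tevals Rt (map (mulmx^~ P) (take m (ys ++ zs)) ++ s :: drop m.+1 (ys ++ zs)).
Proof.
move=> m_ys size_q; have drop_catl l : drop m.+1 (ys ++ l) = drop m.+1 ys ++ l.
  rewrite drop_cat; case: ltnP => // ys_m1.
  have -> : m.+1 = size ys by apply/eqP; rewrite eqn_leq m_ys.
  by rewrite subnn drop0 drop_size.
rewrite /extension_term !nth_cat m_ys !take_cat m_ys !drop_catl; congr (_ * _).
apply: perm_tevals => //.
  by rewrite !size_cat /= size_cat size_map size_takel ?size_drop; lia.
by rewrite perm_cat2l -cat1s perm_catCA.
Qed.

Lemma extension_form_cat_cons ys zs : size ys + size zs = q ->
  extension_form (ys ++ s :: zs) = tevals Rt (ys ++ zs).
Proof.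
move=> size_q; have ys_q : (size ys <= q)%N by rewrite -size_q leq_addr.
rewrite /extension_form -(big_mkord xpredT) (big_cat_nat _ (n := size ys)) //=; last first.
  exact: ltnW.
rewrite [X in _ + X]big_ltn ?ltnS // extension_term_cat_cons_size.
rewrite [X in _ + (_ + X)]big_nat_cond [X in _ + (_ + X)]big1 ?addr0; last first.
  by move=> m /andP[m_range _]; rewrite extension_term_cat_cons_gt.
under eq_big_nat => m /andP[_ m_ys] do rewrite extension_term_cat_cons_lt //.
rewrite big_mkord -tevals_project_prefix ?size_cat ?leq_addr //.
by rewrite /project_prefix take_size_cat // drop_size_cat // subrK.
Qed.

Lemma extension_form_mem xs : s \in xs -> size xs = q.+1 ->
  extension_form xs = tevals Rt (rem s xs).
Proof.
move=> s_xs size_xs; rewrite remE -{1}(cat_take_drop (index s xs) xs).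
rewrite (drop_nth s) ?index_mem // nth_index // extension_form_cat_cons //.
by rewrite size_takel ?size_drop ?size_xs; have := index_mem s xs; rewrite s_xs size_xs; lia.
Qed.

Lemma extension_null_on_perp : null_on_perp s extension.
Proof.
move=> u u_perp; rewrite teval_map_enum tevals_extension; last first.
  by rewrite size_map size_enum_ord.
rewrite /extension_form big1 // => m _; rewrite /extension_term (nth_map m); last first.
  by rewrite size_enum_ord.
by rewrite nth_ord_enum /coef u_perp !mul0r.
Qed.

Lemma perm_tevals_extension xs ys : s \in xs -> size xs = q.+1 -> perm_eq xs ys ->
  tevals extension xs = tevals extension ys.
Proof.
move=> s_xs size_xs xs_ys; have s_ys : s \in ys by rewrite -(perm_mem xs_ys).
have size_ys : size ys = q.+1 by rewrite -(perm_size xs_ys).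
rewrite !tevals_extension // !extension_form_mem //.
apply: perm_tevals => //; first by rewrite size_rem // size_ys.
rewrite -(perm_cons s) -(permPr (perm_to_rem s_ys)).
by rewrite -(permPl (perm_to_rem s_xs)).
Qed.

Lemma extension_sym : sym_tensor extension.
Proof.
move=> sigma idx.
pose D := [ffun idx : {ffun 'I_q.+1 -> 'I_n} => extension [ffun k => idx (sigma k)]] - extension.
suff /ffunP/(_ idx) : D = 0 by rewrite !ffunE => /eqP; rewrite subr_eq0 => /eqP.
apply: (null_on_perp_s_eq0 s_neq0) => [u u_perp | u k uk].
  by rewrite tevalB -teval_perm !extension_null_on_perp ?subrr.
rewrite tevalB -teval_perm !teval_map_enum map_comp.
rewrite (perm_tevals_extension _ _ (perm_map _ (perm_enum_perm sigma))) ?subrr //.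
  by rewrite -uk map_f // (perm_mem (perm_enum_perm sigma)) mem_enum.
by rewrite !size_map -enumT size_enum_ord.
Qed.

Lemma contract_extension : contract s extension = Rt.
Proof.
apply: tensorP => v; rewrite !teval_map_enum tevals_contract tevals_extension /=.
  by rewrite -[s :: _]cat0s extension_form_cat_cons // size_map size_enum_ord.
by rewrite size_map size_enum_ord.
Qed.

Lemma sub_extension_null_on_s (V : tensor R n q.+1) :
  sym_tensor V -> contract s V = Rt -> null_on_s s (V - extension).
Proof.
move=> V_sym V_s; apply: sym_contract_null_on_s; first exact: sym_tensorB extension_sym.
by rewrite contractB V_s contract_extension subrr.
Qed.

Lemma extension_unique (V : tensor R n q.+1) :
  sym_tensor V -> contract s V = Rt -> null_on_perp s V -> V = extension.
Proof.
move=> V_sym V_s V_perp; apply/eqP; rewrite -subr_eq0; apply/eqP.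
apply: (null_on_perp_s_eq0 s_neq0); last exact: sub_extension_null_on_s.
by move=> u u_perp; rewrite tevalB V_perp ?extension_null_on_perp ?subrr.
Qed.

Lemma tdot_sub_extension (V : tensor R n q.+1) :
  sym_tensor V -> contract s V = Rt ->
  tdot V V = tdot extension extension + tdot (V - extension) (V - extension).
Proof.
move=> V_sym V_s; rewrite -tdot_pythagoras; first by rewrite addrC subrK.
apply: (tdot_null_on_perp_s s_neq0 extension_null_on_perp).
exact: sub_extension_null_on_s.
Qed.

End Extension.

Section Positivity.
Variables (R : realDomainType) (n : nat).

Lemma dotv_self_neq0 (s : 'rV[R]_n) : s != 0 -> dotv s s != 0.
Proof.
apply: contraNneq => /eqP; rewrite psumr_eq0 => [/allP s0|i _]; last by rewrite -expr2 sqr_ge0.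
apply/eqP/rowP => i; have /implyP := s0 i (mem_index_enum i).
by rewrite mulf_eq0 orbb mxE => /(_ isT)/eqP.
Qed.

Lemma tdot_self_ge0 p (T : tensor R n p) : 0 <= tdot T T.
Proof. by apply: sumr_ge0 => idx _; rewrite -expr2 sqr_ge0. Qed.

Lemma tdot_self_eq0 p (T : tensor R n p) : tdot T T = 0 -> T = 0.
Proof.
move=> /eqP; rewrite psumr_eq0 => [/allP T0|idx _]; last by rewrite -expr2 sqr_ge0.
apply/ffunP => idx; have /implyP := T0 idx (mem_index_enum idx).
by rewrite mulf_eq0 orbb ffunE => /(_ isT)/eqP.
Qed.

End Positivity.

Lemma frobE (R : rcfType) n p (T : tensor R n p) : frob T = Num.sqrt (tdot T T).
Proof. by congr Num.sqrt; apply: eq_bigr => idx _; rewrite expr2. Qed.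

Section MinimumNorm.
Variables (R : rcfType) (n q : nat) (s : 'rV[R]_n).
Hypothesis s_neq0 : dotv s s != 0.
Variable Rt : tensor R n q.
Hypothesis Rt_sym : sym_tensor Rt.

Lemma frob_extension_le (V : tensor R n q.+1) : sym_tensor V -> contract s V = Rt ->
  frob (extension s Rt) <= frob V.
Proof.
move=> V_sym V_s; rewrite !frobE ler_sqrt ?tdot_self_ge0 //.
by rewrite (tdot_sub_extension _ _ V_sym V_s) // lerDl tdot_self_ge0.
Qed.

Lemma frob_le_extension (V : tensor R n q.+1) : sym_tensor V -> contract s V = Rt ->
  frob V <= frob (extension s Rt) -> V = extension s Rt.
Proof.
move=> V_sym V_s; rewrite !frobE ler_sqrt ?tdot_self_ge0 //.
rewrite (tdot_sub_extension _ _ V_sym V_s) // -lerBrDl subrr => le0.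
apply/eqP; rewrite -subr_eq0; apply/eqP/tdot_self_eq0.
by apply/eqP; rewrite eq_le le0 tdot_self_ge0.
Qed.

End MinimumNorm.

Theorem mainTheorem2 (R : realType) (n p : nat) (hp : (2 <= p)%N)
  (s : 'rV[R]_n) (hs : s != 0) (Rt : tensor R n p.-1) (hR : sym_tensor Rt) :
  let feasible (U : tensor R n p) := sym_tensor U /\ contract s U = Rt in
  let minimizer (U : tensor R n p) :=
    feasible U /\ (forall V : tensor R n p, feasible V -> frob U <= frob V) in
  let charac (U : tensor R n p) :=
    feasible U /\
    (forall u : 'I_p -> 'rV[R]_n, (forall k, dotv (u k) s = 0) -> teval U u = 0) in
  exists U : tensor R n p,
    (minimizer U /\ forall V, minimizer V -> V = U) /\
    (charac U /\ forall V, charac V -> V = U).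
Proof.
case: p hp Rt hR => [|q] // _ Rt Rt_sym feasible minimizer charac.
have s_neq0 := dotv_self_neq0 hs.
have U_feas : feasible (extension s Rt).
  by split; [exact: extension_sym | exact: contract_extension].
exists (extension s Rt); split; split => //.
- by split=> // V [V_sym V_s]; exact: frob_extension_le.
- by move=> V [[V_sym V_s] V_min]; apply: frob_le_extension => //; exact: V_min.
- by split=> //; exact: extension_null_on_perp.
- by move=> V [[V_sym V_s] V_perp]; exact: extension_unique.
Qed.
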